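(* Let $p\in J$ and let $p=a_Iq_I+a_Jq_J$ (with $a_I+a_J=1$) be a two-point splitting that is optimal at $p$, i.e. attains the maximum in $V_\delta(p)=\max_{\mu\in\mathcal{S}(p)}\{(1-\delta)\mu(\{q\in I\})+\delta\,\mathbb{E}_\mu[V_\delta(\phi(q))]\}$. If $a_I>0$ and $a_J>0$, then (1) $V_\delta$ is affine on the segment $[q_I,q_J]$; and (2) for every $p'\in[q_I,q_J]$, the splitting of $p'$ between $q_I$ and $q_J$ (with the weights determined by $p'$) is optimal at $p'$.
   Context: Let $\Omega$ be a finite set, identify each $\omega$ with a unit vector of $\mathbb{R}^\Omega$ and $\Delta(\Omega)$ with the unit simplex. Let $M$ be the transition matrix of an irreducible Markov chain on $\Omega$, $r:\Omega\to\mathbb{R}$, $\delta\in[0,1)$, $\phi(q)=qM$. $I=\{p:\sum_\omega p(\omega)r(\omega)\ge0\}$, $J=\Delta(\Omega)\setminus I$. $\mathcal{S}(p)$ is the set of Borel probability measures on $\Delta(\Omega)$ with mean $p$; a decomposition $p=a_Iq_I+a_Jq_J$ is identified with the measure giving weight $a_I$ to $q_I$ and $a_J$ to $q_J$. $V_\delta$ is the value of the advisor's problem (at each stage choose $\mu\in\mathcal{S}(p_n)$, draw $q_n\sim\mu$, receive $\mathbf{1}_{\{q_n\in I\}}$, move to $p_{n+1}=\phi(q_n)$, payoff $\mathbb{E}[(1-\delta)\sum_n\delta^{n-1}\mathbf{1}_{\{q_n\in I\}}]$), the unique solution of the dynamic programming equation in the claim. *)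

From HB Require Import structures.
From mathcomp Require Import all_boot all_order all_algebra.
From mathcomp Require Import all_classical all_reals all_analysis.
Set Implicit Arguments. Unset Strict Implicit. Unset Printing Implicit Defensive.
Import Order.TTheory GRing.Theory Num.Theory numFieldNormedType.Exports.
Local Open Scope classical_set_scope.
Local Open Scope ring_scope.

Section Defs.
Variables (Omega : finType) (R : realType).

(* R^Omega with the product (= Euclidean) topology and its Borel sigma-algebra *)
Definition RO := {ptws Omega -> R}%type.
Definition BorelRO := g_sigma_algebraType (@open RO).

Definition simplex : set (Omega -> R) :=
  [set q | (forall w, 0 <= q w) /\ \sum_w q w = 1].

Definition stochastic (M : Omega -> Omega -> R) :=
  (forall w w', 0 <= M w w') /\ (forall w, \sum_w' M w w' = 1).

Fixpoint mpow (M : Omega -> Omega -> R) (n : nat) : Omega -> Omega -> R :=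
  match n with
  | 0%N => fun w w' => (w == w')%:R
  | k.+1 => fun w w' => \sum_v mpow M k w v * M v w'
  end.

Definition irreducible (M : Omega -> Omega -> R) :=
  forall w w', exists n, 0 < mpow M n w w'.

Definition phi (M : Omega -> Omega -> R) (q : Omega -> R) : Omega -> R :=
  fun w' => \sum_w q w * M w w'.

(* I = {p | sum_w p(w) r(w) >= 0} (boolean), J = simplex \ I *)
Definition inI (r : Omega -> R) (q : Omega -> R) : bool := 0 <= \sum_w q w * r w.
Definition Iset (r : Omega -> R) : set (Omega -> R) := [set q | inI r q].

(* S(p): Borel probability measures on Delta(Omega) (i.e. concentrated on the
   simplex) with mean p *)
Definition Sp (p : Omega -> R) (mu : probability BorelRO R) :=
  mu (simplex : set BorelRO) = 1%E /\
  forall w, (\int[mu]_(q in (simplex : set BorelRO)) (q w)%:E = (p w)%:E)%E.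

Definition payoff (M : Omega -> Omega -> R) (r : Omega -> R) (delta : R)
  (V : (Omega -> R) -> R) (mu : probability BorelRO R) : \bar R :=
  ((1 - delta)%:E * mu ((Iset r `&` simplex) : set BorelRO)
   + delta%:E * \int[mu]_(q in (simplex : set BorelRO)) (V (phi M q))%:E)%E.

Definition DP_solution (M : Omega -> Omega -> R) (r : Omega -> R) (delta : R)
  (V : (Omega -> R) -> R) :=
  forall p, simplex p ->
    (forall mu, Sp p mu -> (payoff M r delta V mu <= (V p)%:E)%E) /\
    (exists mu, Sp p mu /\ payoff M r delta V mu = (V p)%:E).

Definition point_value (M : Omega -> Omega -> R) (r : Omega -> R) (delta : R)
  (V : (Omega -> R) -> R) (q : Omega -> R) : R :=
  (1 - delta) * (inI r q)%:R + delta * V (phi M q).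

(* value of the splitting giving weight a to q1 and b to q2 (the measure
   a dirac_q1 + b dirac_q2) *)
Definition split_value (M : Omega -> Omega -> R) (r : Omega -> R) (delta : R)
  (V : (Omega -> R) -> R) (a : R) (q1 : Omega -> R) (b : R) (q2 : Omega -> R) : R :=
  a * point_value M r delta V q1 + b * point_value M r delta V q2.

Definition combo (a : R) (q1 : Omega -> R) (b : R) (q2 : Omega -> R) : Omega -> R :=
  fun w => a * q1 w + b * q2 w.

End Defs.
Arguments simplex {Omega R}.
Arguments Iset {Omega R}.
Arguments BorelRO : clear implicits.

From HB Require Import structures.
From mathcomp Require Import all_boot all_order all_algebra.
From mathcomp Require Import all_classical all_reals all_analysis.
From mathcomp Require Import measurable_realfun.
From mathcomp Require Import ring lra.
Import Order.TTheory GRing.Theory Num.Theory numFieldNormedType.Exports.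
Local Open Scope classical_set_scope.
Local Open Scope ring_scope.

(* Testing the dynamic programming equation against point masses
   gives [point_value q <= V q]; testing it against mixtures of optimal
   measures shows that [V] is concave on the simplex.  An optimal splitting of
   [p] with both weights positive is then squeezed between these two bounds,
   which forces [point_value = V] at [q_I] and [q_J], and makes the concave
   function [t |-> V (t q_I + (1 - t) q_J)] meet its chord at the interior
   point [a_I]; a concave function touching its chord at an interior point
   coincides with it on the whole segment. *)

(** * A concave function touching its chord *)

Definition concave01 {R : realFieldType} (g : R -> R) :=
  forall s u l, 0 <= s <= 1 -> 0 <= u <= 1 -> 0 <= l <= 1 ->
  l * g s + (1 - l) * g u <= g (l * s + (1 - l) * u).

Section ConcaveChord.
Context {R : realFieldType} {g : R -> R}.
Hypothesis g_concave : concave01 g.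

Lemma concave01_chord_le t : 0 <= t <= 1 -> t * g 1 + (1 - t) * g 0 <= g t.
Proof.
move=> t01; have := @g_concave 1 0 t.
by rewrite mulr1 mulr0 addr0; apply; rewrite ?lexx ?ler01.
Qed.

(* The segment [t, a] (or [a, t]) extended to the endpoint 1 (or 0) contains
   [a] in its interior, so concavity at [a] bounds [g t] from above. *)
Lemma concave01_chord_eq {a t} : 0 < a < 1 ->
  g a = a * g 1 + (1 - a) * g 0 ->
  0 <= t <= 1 -> g t = t * g 1 + (1 - t) * g 0.
Proof.
move=> /andP[a0 a1] ga /[dup] t01 /andP[t0 t1].
have zero01 : 0 <= (0 : R) <= 1 by rewrite lexx ler01.
have unit01 : 0 <= (1 : R) <= 1 by rewrite lexx ler01.
apply/eqP; rewrite eq_le concave01_chord_le // andbT.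
have [t_le_a|a_lt_t] := leP t a.
- have t1' : 1 - t > 0 by rewrite subr_gt0 (le_lt_trans t_le_a).
  pose l := (1 - a) / (1 - t).
  have l_pos : 0 < l by rewrite divr_gt0 // subr_gt0.
  have l01 : 0 <= l <= 1.
    by rewrite ltW //= ler_pdivrMr // mul1r lerD2l lerN2.
  have := @g_concave t 1 l t01 unit01 l01.
  have -> : l * t + (1 - l) * 1 = a by rewrite /l; field; rewrite gt_eqF.
  rewrite ga => hc.
  have : l * g t <= l * (t * g 1 + (1 - t) * g 0).
    suff -> : l * (t * g 1 + (1 - t) * g 0) =
              a * g 1 + (1 - a) * g 0 - (1 - l) * g 1 by lra.
    by rewrite /l; field; rewrite gt_eqF.
  by rewrite ler_pM2l.
- have t_pos : 0 < t by rewrite (lt_trans a0).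
  pose l := a / t.
  have l_pos : 0 < l by rewrite divr_gt0.
  have l01 : 0 <= l <= 1 by rewrite ltW //= ler_pdivrMr // mul1r ltW.
  have := @g_concave t 0 l t01 zero01 l01.
  have -> : l * t + (1 - l) * 0 = a by rewrite /l; field; rewrite gt_eqF.
  rewrite ga => hc.
  have : l * g t <= l * (t * g 1 + (1 - t) * g 0).
    suff -> : l * (t * g 1 + (1 - t) * g 0) =
              a * g 1 + (1 - a) * g 0 - (1 - l) * g 0 by lra.
    by rewrite /l; field; rewrite gt_eqF.
  by rewrite ler_pM2l.
Qed.

End ConcaveChord.

(** * Mixtures of probability measures *)

Section BoundedIntegral.
Context {d} {T : measurableType d} {R : realType}.

Lemma bounded_fun_of_norm_le {D : set T} {f : T -> R} {C : R} :
  (forall x, D x -> `|f x| <= C) -> [bounded f x | x in D].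
Proof.
move=> fC; exists C; split; first exact: num_real.
by move=> c Cc x Dx; apply: le_trans (fC x Dx) (ltW Cc).
Qed.

Lemma probability_fin_num (mu : probability T R) {A : set T} :
  measurable A -> mu A \is a fin_num.
Proof.
move=> mA; rewrite ge0_fin_numE ?measure_ge0 //.
exact: le_lt_trans (probability_le1 mu mA) (ltry 1).
Qed.

Lemma bounded_integrable {mu : {measure set T -> \bar R}} {D : set T} {f : T -> R}
  {C : R} : measurable D -> (mu D < +oo)%E -> measurable_fun D f ->
  (forall x, D x -> `|f x| <= C) -> mu.-integrable D (EFin \o f).
Proof.
move=> mD muD mf fC.
exact: measurable_bounded_integrable mD muD mf (bounded_fun_of_norm_le fC).
Qed.

Lemma bounded_integral_fin_num (mu : probability T R) {D : set T} {f : T -> R}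
  {C : R} : measurable D -> measurable_fun D f ->
  (forall x, D x -> `|f x| <= C) -> (\int[mu]_(x in D) (f x)%:E)%E \is a fin_num.
Proof.
move=> mD mf fC; apply: (integrable_fin_num mD).
have muD : (mu D < +oo)%E by rewrite -ge0_fin_numE ?probability_fin_num.
exact: bounded_integrable mD muD mf fC.
Qed.

Lemma integral_mscale_bounded (k : {nonneg R}) (mu : probability T R) {D : set T}
  {f : T -> R} {C : R} : measurable D -> measurable_fun D f ->
  (forall x, D x -> `|f x| <= C) ->
  (\int[mscale k mu]_(x in D) (f x)%:E = k%:num%:E * \int[mu]_(x in D) (f x)%:E)%E.
Proof.
move=> mD mf fC.
have muD : (mu D < +oo)%E by rewrite -ge0_fin_numE ?probability_fin_num.
have fint := bounded_integrable mD muD mf fC.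
have mfE : measurable_fun D (EFin \o f) by apply/measurable_EFinP.
rewrite (integralE _ _ (EFin \o f)) [in RHS](integralE _ _ (EFin \o f)).
rewrite !ge0_integral_mscale //; [|exact: measurable_funeneg|exact: measurable_funepos].
have pos_fin := integrable_pos_fin_num mD fint.
have neg_fin := integrable_neg_fin_num mD fint.
rewrite [in RHS]muleBr //.
by rewrite fin_num_adde_defr // fin_numN.
Qed.

End BoundedIntegral.

Definition mix_prob d (T : measurableType d) (R : realType) (a b : {nonneg R})
  (ab1 : a%:num + b%:num = 1) (mu1 mu2 : probability T R) : set T -> \bar R :=
  measure_add (mscale a mu1) (mscale b mu2).
Arguments mix_prob {d T R a b} ab1 mu1 mu2.

Section MixProb.
Context {d} {T : measurableType d} {R : realType} {a b : {nonneg R}}.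
Variables (ab1 : a%:num + b%:num = 1) (mu1 mu2 : probability T R).

HB.instance Definition _ :=
  Measure.copy (mix_prob ab1 mu1 mu2) (measure_add (mscale a mu1) (mscale b mu2)).

Lemma mix_prob_setT : mix_prob ab1 mu1 mu2 setT = 1%E.
Proof.
by rewrite /mix_prob measure_addE/= /mscale/= !probability_setT !mule1 -EFinD ab1.
Qed.

HB.instance Definition _ :=
  Measure_isProbability.Build _ _ _ (mix_prob ab1 mu1 mu2) mix_prob_setT.

Lemma mix_probE (A : set T) :
  mix_prob ab1 mu1 mu2 A = (a%:num%:E * mu1 A + b%:num%:E * mu2 A)%E.
Proof. by rewrite /mix_prob measure_addE. Qed.

Lemma integral_mix_prob {D : set T} {f : T -> R} (C : R) :
  measurable D -> measurable_fun D f -> (forall x, D x -> `|f x| <= C) ->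
  (\int[mix_prob ab1 mu1 mu2]_(x in D) (f x)%:E =
   a%:num%:E * \int[mu1]_(x in D) (f x)%:E + b%:num%:E * \int[mu2]_(x in D) (f x)%:E)%E.
Proof.
move=> mD mf fC.
have scale_int (k : {nonneg R}) (mu : probability T R) :
    (mscale k mu).-integrable D (EFin \o f).
  have kmuD : (mscale k mu D < +oo)%E.
    by apply: lte_mul_pinfty => //; rewrite -ge0_fin_numE ?probability_fin_num.
  exact: bounded_integrable mD kmuD mf fC.
rewrite [LHS](integral_measure_add mD (scale_int a mu1) (scale_int b mu2)).
by rewrite !(integral_mscale_bounded _ _ mD mf fC).
Qed.

End MixProb.

Section BorelSimplex.
Context {Omega : finType} {R : realType}.
Local Notation BO := (BorelRO Omega R).

Lemma measurable_coord {D : set BO} (w : Omega) :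
  measurable D -> measurable_fun D (fun q : BO => q w).
Proof.
move=> mD; apply: (measurability _ (RGenOpens.measurableE R)).
move=> _ [_ [x [y ->]] <-]; apply: measurableI => //; apply: sub_sigma_algebra.
have coord_cont : continuous (@proj Omega (fun _ => R) w : RO Omega R -> R).
  exact: proj_continuous.
exact: (continuousP _).1 coord_cont `]x, y[%classic (interval_open _ _).
Qed.

Lemma measurable_simplex : measurable (simplex : set BO).
Proof.
have sum_mfun : measurable_fun setT (fun q : BO => \sum_w q w).
  by apply: measurable_sum => w; exact: measurable_coord w measurableT.
have -> : (simplex : set BO) =
    (\bigcap_(w in setT) (setT `&` (fun q : BO => q w) @^-1` `[0, +oo[%classic))
    `&` (setT `&` (fun q : BO => \sum_w q w) @^-1` `[1, 1]%classic).
  apply/seteqP; split => q /=.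
    case=> q0 q1; split; first by move=> w _; split => //=; rewrite in_itv /= andbT q0.
    by split => //=; rewrite in_itv /= q1 lexx.
  case=> q0 [_ /=]; rewrite in_itv /= => /andP[q1 q1'].
  split; last by apply/eqP; rewrite eq_le q1' q1.
  by move=> w; have [_ /=] := q0 w I; rewrite in_itv /= andbT.
apply: measurableI; last exact: sum_mfun (measurable_itv _).
apply: fin_bigcap_measurable => [|w _]; first exact: finite_finset.
by apply: (measurable_coord w measurableT) => //; exact: measurable_itv.
Qed.

Lemma measurable_Iset_simplex (r : Omega -> R) :
  measurable ((Iset r `&` simplex) : set BO).
Proof.
have reward_mfun : measurable_fun (simplex : set BO) (fun q : BO => \sum_w q w * r w).
  apply: measurable_sum => w; apply: measurable_funM; last exact: measurable_cst.
  exact: measurable_coord w measurable_simplex.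
rewrite setIC; have := reward_mfun measurable_simplex _ (measurable_itv `[0, +oo[).
congr measurable; apply/seteqP; split => q /=.
  by case=> sq Iq; split => //; rewrite /Iset /inI /= in_itv /= andbT in Iq *.
by case=> sq; rewrite in_itv /= andbT => Iq; split.
Qed.

End BorelSimplex.

Section Simplex.
Context {Omega : finType} {R : realType}.
Implicit Types (q x y : Omega -> R) (M : Omega -> Omega -> R).

Lemma simplex_coord_bound q w : simplex q -> 0 <= q w <= 1.
Proof.
move=> [q0 q1]; rewrite q0 -q1 (bigD1 w) //= lerDl.
exact: sumr_ge0.
Qed.

Lemma simplex_combo x y a b : simplex x -> simplex y -> 0 <= a -> 0 <= b ->
  a + b = 1 -> simplex (combo a x b y).
Proof.
move=> [x0 x1] [y0 y1] a0 b0 ab1; split=> [w|].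
  by rewrite /combo addr_ge0 ?mulr_ge0.
by rewrite /combo big_split -!mulr_sumr x1 y1 !mulr1.
Qed.

Lemma simplex_segment {x y t} : simplex x -> simplex y -> 0 <= t <= 1 ->
  simplex (combo t x (1 - t) y).
Proof.
move=> sx sy /andP[t0 t1].
by apply: simplex_combo; rewrite ?subr_ge0 // addrC subrK.
Qed.

Lemma simplex_phi M q : stochastic M -> simplex q -> simplex (phi M q).
Proof.
move=> [M0 M1] [q0 q1]; split=> [w|].
  by apply: sumr_ge0 => i _; rewrite mulr_ge0.
rewrite /phi exchange_big -q1; apply: eq_bigr => i _.
by rewrite -mulr_sumr M1 mulr1.
Qed.

Lemma combo_segment x y s u l :
  combo l (combo s x (1 - s) y) (1 - l) (combo u x (1 - u) y) =
  combo (l * s + (1 - l) * u) x (1 - (l * s + (1 - l) * u)) y.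
Proof. by apply/funext => w; rewrite /combo; ring. Qed.

Lemma combo_segment1 x y : combo 1 x (1 - 1) y = x.
Proof. by apply/funext => w; rewrite /combo subrr mul1r mul0r addr0. Qed.

Lemma combo_segment0 x y : combo 0 x (1 - 0) y = y.
Proof. by apply/funext => w; rewrite /combo subr0 mul1r mul0r add0r. Qed.

End Simplex.

Section Payoff.
Context {Omega : finType} {R : realType}.
Local Notation BO := (BorelRO Omega R).
Context {M : Omega -> Omega -> R} {r : Omega -> R} {delta : R}
  {V : (Omega -> R) -> R} {C : R}.
Hypothesis V_phi_mfun : measurable_fun (simplex : set BO) (fun q => V (phi M q)).
Hypothesis V_phi_bounded : forall q, simplex q -> `|V (phi M q)| <= C.

Lemma Sp_dirac {q : BO} : simplex q -> Sp q (\d_q).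
Proof.
move=> sq; split=> [|w]; first by rewrite /= diracE mem_set.
have coord_mfun := measurable_coord w measurable_simplex.
rewrite integral_dirac //; last exact/measurable_EFinP.
2: exact: measurable_simplex.
by rewrite diracE mem_set // mul1e.
Qed.

Lemma payoff_dirac {q : BO} : simplex q ->
  payoff M r delta V \d_q = (point_value M r delta V q)%:E.
Proof.
move=> sq; rewrite /payoff /= integral_dirac //; last exact/measurable_EFinP.
2: exact: measurable_simplex.
rewrite !diracE (mem_set sq) mul1e /point_value.
have -> : (q \in Iset r `&` simplex) = inI r q.
  by apply/idP/idP => [/set_mem [] //|Iq]; apply: mem_set.
by rewrite -!EFinM -EFinD.
Qed.

Lemma Sp_mix_prob {a b : {nonneg R}} (ab1 : a%:num + b%:num = 1) {x y : Omega -> R}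
  {mu1 mu2 : probability BO R} :
  Sp x mu1 -> Sp y mu2 -> Sp (combo a%:num x b%:num y) (mix_prob ab1 mu1 mu2).
Proof.
move=> [S1 E1] [S2 E2]; split=> [|w].
  by rewrite /= mix_probE S1 S2 !mule1 -EFinD ab1.
rewrite (integral_mix_prob ab1 mu1 mu2 1 measurable_simplex).
- by rewrite E1 E2 -!EFinM -EFinD.
- exact: measurable_coord w measurable_simplex.
- by move=> q /(simplex_coord_bound _ w) /andP[q0 q1]; rewrite ger0_norm.
Qed.

Lemma payoff_mix_prob {a b : {nonneg R}} (ab1 : a%:num + b%:num = 1)
  (mu1 mu2 : probability BO R) :
  payoff M r delta V (mix_prob ab1 mu1 mu2) =
  (a%:num%:E * payoff M r delta V mu1 + b%:num%:E * payoff M r delta V mu2)%E.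
Proof.
rewrite /payoff /= mix_probE.
rewrite (integral_mix_prob ab1 mu1 mu2 C measurable_simplex V_phi_mfun V_phi_bounded).
have fin_I (mu : probability BO R) :=
  probability_fin_num mu (measurable_Iset_simplex r).
have fin_V (mu : probability BO R) :=
  bounded_integral_fin_num mu measurable_simplex V_phi_mfun V_phi_bounded.
rewrite -(fineK (fin_I mu1)) -(fineK (fin_I mu2)).
rewrite -(fineK (fin_V mu1)) -(fineK (fin_V mu2)).
by rewrite -!EFinM -!EFinD; congr EFin; ring.
Qed.

End Payoff.

(** * Consequences of the dynamic programming equation *)

Section DynamicProgramming.
Context {Omega : finType} {R : realType}.
Local Notation BO := (BorelRO Omega R).
Context {M : Omega -> Omega -> R} {r : Omega -> R} {delta : R}
  {V : (Omega -> R) -> R} {C : R}.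
Hypothesis M_stochastic : stochastic M.
Hypothesis V_DP : DP_solution M r delta V.
Hypothesis V_phi_mfun : measurable_fun (simplex : set BO) (fun q => V (phi M q)).
Hypothesis V_bounded : forall q, simplex q -> `|V q| <= C.

Let V_phi_bounded q : simplex q -> `|V (phi M q)| <= C.
Proof. by move=> sq; apply/V_bounded/simplex_phi. Qed.

Local Notation f := (point_value M r delta V).

Lemma point_value_le {q} : simplex q -> f q <= V q.
Proof.
move=> sq; have [le_V _] := V_DP q sq.
by have := le_V _ (Sp_dirac sq); rewrite (payoff_dirac V_phi_mfun sq) lee_fin.
Qed.

(* Mixing two measures with means [x] and [y] is a candidate at the mixed mean. *)
Lemma mix_payoff_le {x y mu1 mu2 u v t} : simplex x -> simplex y -> 0 <= t <= 1 ->
  Sp x mu1 -> Sp y mu2 ->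
  payoff M r delta V mu1 = u%:E -> payoff M r delta V mu2 = v%:E ->
  t * u + (1 - t) * v <= V (combo t x (1 - t) y).
Proof.
move=> sx sy /[dup] t01 /andP[t0 t1] S1 S2 P1 P2.
have t0' : 0 <= 1 - t by rewrite subr_ge0.
have ab1 : (NngNum t0)%:num + (NngNum t0')%:num = 1 by rewrite /= addrC subrK.
have [le_V _] := V_DP _ (simplex_segment sx sy t01).
have := le_V _ (Sp_mix_prob ab1 S1 S2).
by rewrite (payoff_mix_prob V_phi_mfun V_phi_bounded) P1 P2 lee_fin.
Qed.

Lemma value_concave {x y t} : simplex x -> simplex y -> 0 <= t <= 1 ->
  t * V x + (1 - t) * V y <= V (combo t x (1 - t) y).
Proof.
move=> sx sy t01.
have [_ [mu1 [S1 P1]]] := V_DP x sx.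
have [_ [mu2 [S2 P2]]] := V_DP y sy.
exact: mix_payoff_le sx sy t01 S1 S2 P1 P2.
Qed.

(* Optimality at an interior point squeezes [split_value] between the
   concavity bound [t V x + (1 - t) V y] and [V], and each term of the
   difference is nonnegative by [point_value_le]. *)
Lemma optimal_split_point_value {x y a} : simplex x -> simplex y -> 0 < a < 1 ->
  V (combo a x (1 - a) y) = split_value M r delta V a x (1 - a) y ->
  f x = V x /\ f y = V y.
Proof.
move=> sx sy /andP[a0 a1] opt.
have a01 : 0 <= a <= 1 by rewrite !ltW.
have := value_concave sx sy a01; rewrite opt /split_value => conc.
have fx := point_value_le sx; have fy := point_value_le sy.
have a1' : 0 < 1 - a by rewrite subr_gt0.
have : a * (V x - f x) <= 0 by nra.
have : (1 - a) * (V y - f y) <= 0 by nra.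
rewrite !pmulr_rle0 // !subr_le0 => Vy Vx.
by split; apply/eqP; rewrite eq_le ?fx ?fy.
Qed.

Lemma value_segment_concave {x y} : simplex x -> simplex y ->
  concave01 (fun t => V (combo t x (1 - t) y)).
Proof.
move=> sx sy s u l s01 u01 l01.
rewrite -combo_segment.
exact: value_concave (simplex_segment sx sy s01) (simplex_segment sx sy u01) l01.
Qed.

End DynamicProgramming.

Theorem lemma7 (Omega : finType) (R : realType)
  (M : Omega -> Omega -> R) (r : Omega -> R) (delta : R)
  (V : (Omega -> R) -> R) (p qI qJ : Omega -> R) (aI aJ : R) :
  stochastic M -> irreducible M -> 0 <= delta -> delta < 1 ->
  DP_solution M r delta V ->
  (exists C : R, forall q, simplex q -> `|V q| <= C) ->
  measurable_fun (simplex : set (BorelRO Omega R)) (fun q => V (phi M q)) ->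
  simplex p -> ~~ inI r p ->
  simplex qI -> simplex qJ ->
  0 < aI -> 0 < aJ -> aI + aJ = 1 ->
  p = combo aI qI aJ qJ ->
  V p = split_value M r delta V aI qI aJ qJ ->
  (forall t, 0 <= t <= 1 ->
     V (combo t qI (1 - t) qJ) = t * V qI + (1 - t) * V qJ) /\
  (forall t, 0 <= t <= 1 ->
     V (combo t qI (1 - t) qJ) = split_value M r delta V t qI (1 - t) qJ).
Proof.
move=> M_st _ _ _ V_DP [C V_bdd] V_phi_mfun _ _ sI sJ aI0 aJ0 aIJ -> opt.
have aJE : aJ = 1 - aI by lra.
have aI01 : 0 < aI < 1 by rewrite aI0 -subr_gt0 -aJE.
rewrite aJE in opt.
have [fI fJ] := optimal_split_point_value M_st V_DP V_phi_mfun V_bdd sI sJ aI01 opt.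
have g_conc := value_segment_concave M_st V_DP V_phi_mfun V_bdd sI sJ.
have chord := concave01_chord_eq g_conc aI01.
rewrite /= !combo_segment1 !combo_segment0 opt /split_value fI fJ in chord.
by split=> t t01; rewrite chord // /split_value fI fJ.
Qed.
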